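(* Let $K$ be an algebraically closed field of characteristic zero, $\mathcal{K}=K(t)$, $\alpha \in \mathcal{K}$, and $M \ge 0$. Let \[\phi_1(z) = -\frac{t(z+1)}{z-(t-1)}.\] Then $\alpha$ fails to realize portrait $(M,1)$ for $f_2(z) = z^2+t$ if and only if $M = 1$ and $\alpha \in \mathcal{O}_{\phi_1}(0)\cup\mathcal{O}_{\phi_1}(\infty)$. Moreover, for each $k\ge0$, $h(\phi_1^k(0)) = h(\phi_1^k(\infty)) = k$.
   Context: $\phi_1$ is viewed as a self-map of $\mathbb{P}^1(\mathcal{K})$ and $\mathcal{O}_{\phi_1}(x) = \{\phi_1^k(x): k\ge0\}$. The height $h$ of an element of $K(t)$ is its degree as a rational function in $t$, with $h(\infty)=0$. For $c \in K$, $f_{2,c}(z) = z^2+c$. A point $x$ has preperiodic portrait $(M,N)$ for $\phi$ if $M\ge0$ is minimal with $\phi^M(x)$ periodic and $\phi^M(x)$ has exact period $N$. We say $\alpha$ realizes portrait $(M,N)$ for $f_2$ if there exists $c \in K$ such that $\alpha(c)$ (reduction modulo the place $t=c$) has portrait $(M,N)$ for $f_{2,c}$. *)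

From HB Require Import structures.
From mathcomp Require Import all_boot all_order all_algebra.
Set Implicit Arguments. Unset Strict Implicit. Unset Printing Implicit Defensive.
Import Order.TTheory GRing.Theory Num.Theory.
Local Open Scope ring_scope.

(* The rational function field  K(t) = Frac(K[t]);  the variable t is 'X. *)
Definition Kt (K : closedFieldType) := {fraction {poly K}}.

Definition fracpq (K : closedFieldType) (p q : {poly K}) : Kt K :=
  FracField.tofrac p / FracField.tofrac q.

Definition tK (K : closedFieldType) : Kt K := FracField.tofrac 'X.

(* P^1(K(t)) = option (K(t)), with None the point at infinity. *)
Definition phi1 (K : closedFieldType) (z : option (Kt K)) : option (Kt K) :=
  match z with
  | None => Some (- tK K)
  | Some w =>
      if w - (tK K - 1) == 0 then None
      else Some (- (tK K * (w + 1)) / (w - (tK K - 1)))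
  end.

Definition phi1_orbit (K : closedFieldType) (x y : option (Kt K)) : Prop :=
  exists k : nat, iter k (@phi1 K) x = y.

(* Height: h(alpha) = degree of alpha as a rational function in t, i.e.
   max(deg p, deg q) for alpha = p/q in lowest terms;  h(infty) = 0. *)
Definition has_height (K : closedFieldType) (x : option (Kt K)) (n : nat) : Prop :=
  match x with
  | None => n = 0%N
  | Some a => exists p q : {poly K}, [/\ q != 0, coprimep p q,
                a = fracpq p q & n = maxn (size p).-1 (size q).-1]
  end.

(* Reduction of alpha modulo the place t = c (finite value):
   alpha(c) = v  iff alpha = p/q with q(c) <> 0 and v = p(c)/q(c). *)
Definition eval_at (K : closedFieldType) (a : Kt K) (c v : K) : Prop :=
  exists p q : {poly K}, [/\ q.[c] != 0, a = fracpq p q & v = p.[c] / q.[c]].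

Definition periodic (T : Type) (f : T -> T) (y : T) : Prop :=
  exists n : nat, (0 < n)%N /\ iter n f y = y.

Definition exact_period (T : Type) (f : T -> T) (y : T) (N : nat) : Prop :=
  [/\ (0 < N)%N, iter N f y = y & forall n : nat, (0 < n < N)%N -> iter n f y <> y].

Definition has_portrait (T : Type) (f : T -> T) (x : T) (M N : nat) : Prop :=
  [/\ periodic f (iter M f x),
      (forall m : nat, (m < M)%N -> ~ periodic f (iter m f x))
    & exact_period f (iter M f x) N].

Definition f2 (K : closedFieldType) (c : K) (z : K) : K := z ^+ 2 + c.

Definition realizes (K : closedFieldType) (a : Kt K) (M N : nat) : Prop :=
  exists c v : K, eval_at a c v /\ has_portrait (f2 c) v M N.

From HB Require Import structures.
From mathcomp Require Import all_boot all_order all_algebra.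
From mathcomp Require Import zify ring.
From Stdlib Require Import Classical.
Import Order.TTheory GRing.Theory Num.Theory.
Local Open Scope ring_scope.
Set Implicit Arguments. Unset Strict Implicit. Unset Printing Implicit Defensive.

(* Write [alpha = P/Q] in lowest terms. [alpha] is sent by [z^2 + c] to its
   opposite, hence realizes (1,1), at every root [c] of the numerator
   [P^2 + P Q + t Q^2] of [alpha^2 + alpha + t] with [P(c) <> 0]; over an
   algebraically closed field this fails exactly when that numerator is a
   monomial [l t^n] and [P(0) = 0].  [phi1] raises the index [n] of such
   "exceptional" fractions by 2 and every exceptional fraction of index at
   least 3 has an exceptional [phi1]-preimage, while the indices 1 and 2 are
   realized by [0] and [-t = phi1 infinity]; the index also gives the height.
   Portrait (0,1) is realized at a root of [P^2 - P Q + t Q^2], and (M,1) for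
   [M >= 2] by applying the (1,1) criterion to [f^(M-1)(alpha)], a fraction
   [(G^2 + t R^2) / R^2] which in characteristic not 2 is never exceptional. *)

Local Notation "x %:F" := (FracField.tofrac x).

Lemma tofrac_ratio (R : idomainType) (x : {fraction R}) :
  exists p q : R, q != 0 /\ x = p%:F / q%:F.
Proof.
exists (\n_(repr x)), (\d_(repr x)); split; first exact: denom_ratioP.
rewrite -[x in LHS]reprK; set r := repr x.
unlock FracField.tofrac; rewrite -[r in LHS]Ratio_numden.
rewrite -[_ / _]/(FracField.mul _ (FracField.inv _)).
rewrite -FracField.pi_inv -FracField.pi_mul.
apply/eqmodP; rewrite /= FracField.equivfE /FracField.mulf /FracField.invf.
by rewrite !numden_Ratio ?oner_neq0 ?mulr1 ?mul1r ?denom_ratioP // mulrC.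
Qed.

(* Field identities used in [Kt K] are proved over an abstract field, where
   [field] runs fast, and then instantiated. *)
Lemma divr_subl (F : fieldType) (a b c : F) : b != 0 -> a / b - c = (a - c * b) / b.
Proof. by move=> b0; field. Qed.

Lemma phi1_mobius (F : fieldType) (a b x : F) : b != 0 -> a - (x - 1) * b != 0 ->
  - (x * (a / b + 1)) / (a / b - (x - 1)) = - (x * (a + b)) / (a - (x - 1) * b).
Proof. by move=> b0 d0; field; rewrite d0 b0. Qed.

Lemma sqr_div_addr (F : fieldType) (p q x : F) : q != 0 ->
  (p / q) ^+ 2 + x = (p * p + x * (q * q)) / (q * q).
Proof. by move=> q0; field. Qed.

Lemma poly_roots0 (K : closedFieldType) (p : {poly K}) :
  (forall c, root p c -> c = 0) -> p = lead_coef p *: 'X^((size p).-1).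
Proof.
have [->|p0] := eqVneq p 0; first by rewrite lead_coef0 scale0r.
move=> r0; have [rs ep] := closed_field_poly_normal p.
have lp0 : lead_coef p != 0 by rewrite lead_coef_eq0.
have /all_pred1P Ers : all (pred1 0) rs.
  by apply/allP => z zin; apply/eqP/r0; rewrite ep rootZ // root_prod_XsubC.
have Eprod : \prod_(z <- rs) ('X - z%:P) = 'X^(size rs) :> {poly K}.
  by rewrite Ers big_nseq size_nseq subr0; elim: (size rs) => //= n ->; rewrite exprS.
by rewrite {1}ep Eprod [in size p]ep size_scale // size_prod_XsubC.
Qed.

Lemma mulXI (R : idomainType) : injective (GRing.mul ('X : {poly R})).
Proof. by apply: mulfI; rewrite polyX_eq0. Qed.

Section Fractions.
Variable K : closedFieldType.
Implicit Types (P Q A B C D : {poly K}) (a : Kt K).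

Lemma fracpq_eqP A B C D : B != 0 -> D != 0 ->
  reflect (fracpq A B = fracpq C D) (A * D == C * B).
Proof.
move=> B0 D0; rewrite -tofrac_eq !tofracM -eqr_div ?tofrac_eq0 //.
exact: eqP.
Qed.

Lemma fracpq0 Q : fracpq 0 Q = 0.
Proof. by rewrite /fracpq tofrac0 mul0r. Qed.

Lemma fracpq_coprime a : exists P Q, [/\ Q != 0, coprimep P Q & a = fracpq P Q].
Proof.
have [p [q [q0 ->]]] := tofrac_ratio a.
have g0 : gcdp p q != 0 by rewrite gcdp_eq0 negb_and q0 orbT.
have Ep : p %/ gcdp p q * gcdp p q = p by rewrite divpK // dvdp_gcdl.
have Eq : q %/ gcdp p q * gcdp p q = q by rewrite divpK // dvdp_gcdr.
have q'0 : q %/ gcdp p q != 0 by apply: contraNneq q0 => h; rewrite -Eq h mul0r.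
exists (p %/ gcdp p q), (q %/ gcdp p q); split => //.
  by apply: coprimep_div_gcd; rewrite q0 orbT.
apply/(fracpq_eqP _ _ q0 q'0); move: Ep Eq.
set g := gcdp p q; set p' := p %/ g; set q' := q %/ g => <- <-.
by rewrite mulrAC -mulrA.
Qed.

Lemma eval_at_coprime P Q c v : Q != 0 -> coprimep P Q ->
  eval_at (fracpq P Q) c v <-> Q.[c] != 0 /\ v = P.[c] / Q.[c].
Proof.
move=> Q0 cPQ; split=> [[p [q [qc e ->]]]|[Qc ->]]; last by exists P, Q.
have q0 : q != 0 by apply: contraNneq qc => ->; rewrite horner0.
have /eqP Epq : p * Q == P * q by apply/(fracpq_eqP _ _ q0 Q0).
have cQP : coprimep Q P by rewrite coprimep_sym.
have dQq : Q %| q.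
  by rewrite -(Gauss_dvdpl q (cQP)) mulrC -Epq dvdp_mull.
have Qc : Q.[c] != 0.
  by move: qc; rewrite -(divpK dQq) hornerM; apply: contraNneq => ->; rewrite mulr0.
by split=> //; apply/eqP; rewrite eqr_div // -!hornerM Epq.
Qed.

Definition f2t a : Kt K := a ^+ 2 + tK K.

Lemma f2t_fracpq P Q : Q != 0 ->
  f2t (fracpq P Q) = fracpq (P * P + 'X * (Q * Q)) (Q * Q).
Proof.
move=> Q0; have FQ : Q%:F != 0 :> Kt K by rewrite tofrac_eq0.
by rewrite /f2t /fracpq /tK (sqr_div_addr _ _ FQ) !(tofracD, tofracM).
Qed.

Lemma coprimep_f2t P Q : coprimep P Q -> coprimep (P * P + 'X * (Q * Q)) (Q * Q).
Proof.
rewrite coprimep_sym => cQP.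
by rewrite coprimep_sym addrC coprimep_addl_mul coprimepMl !coprimepMr cQP.
Qed.

Lemma eval_at_f2t a c w : eval_at (f2t a) c w -> exists2 v, eval_at a c v & w = f2 c v.
Proof.
have [P [Q [Q0 cPQ ->]]] := fracpq_coprime a.
have QQ0 : Q * Q != 0 by rewrite mulf_neq0.
rewrite f2t_fracpq // => /(eval_at_coprime _ _ QQ0 (coprimep_f2t cPQ)) [QQc ->].
have Qc : Q.[c] != 0 by apply: contraNneq QQc => Qc0; rewrite hornerM Qc0 mul0r.
exists (P.[c] / Q.[c]); first exact/eval_at_coprime.
by rewrite /f2 (sqr_div_addr _ _ Qc) !(hornerD, hornerM, hornerX).
Qed.

Lemma eval_at_iter_f2t k a c w : eval_at (iter k f2t a) c w ->
  exists2 v, eval_at a c v & w = iter k (f2 c) v.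
Proof.
elim: k w => [|k IH] w; first by exists w.
by case/eval_at_f2t => u /IH [v ev ->] ->; exists v.
Qed.
End Fractions.

Section Portraits.
Variables (T : Type) (f : T -> T).

Lemma periodic_iter k y : periodic f y -> periodic f (iter k f y).
Proof. by case=> n [n0 e]; exists n; rewrite -iterD addnC iterD e. Qed.

Lemma has_portrait_fixed v : f v = v -> has_portrait f v 0%N 1%N.
Proof. by move=> fv; split=> //; [exists 1%N | split=> // n; lia]. Qed.

Lemma has_portrait_iter v M N P : (0 < N)%N ->
  has_portrait f (iter M f v) N P -> has_portrait f v (N + M)%N P.
Proof.
move=> N0 [per notper exact]; split; rewrite ?iterD // => m ltm.
have [leMm|ltmM] := leqP M m.
  by rewrite -(subnK leMm) iterD; apply: notper; lia.
move=> /(periodic_iter (M - m)); rewrite -iterD subnK ?(ltnW ltmM) //.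
exact: notper 0%N N0.
Qed.

Lemma has_portrait11 v : has_portrait f v 1%N 1%N <-> f (f v) = f v /\ f v <> v.
Proof.
split=> [[_ notper [_ ffv _]]|[ffv fv]].
  by split=> // fv; apply: (notper 0%N) => //; exists 1%N.
split=> [|[|//] _ [[|n] [//= _ e]]|]; first by exists 1%N.
  by apply: fv; rewrite -{2}e -iterS iterSr iter_fix.
by split=> // n; lia.
Qed.
End Portraits.

Section AntifixNum.
Variable K : closedFieldType.
Implicit Types (c : K) (P Q : {poly K}).

(* For [alpha = P/Q] this is the numerator of [alpha^2 + alpha + t]: at its
   roots [c], [alpha(c)] is sent by [f2 c] to its opposite, a fixed point. *)
Definition antifix_num P Q : {poly K} := P * P + P * Q + 'X * (Q * Q).

Lemma horner_antifix_num P Q c : Q.[c] != 0 ->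
  (antifix_num P Q).[c] =
  ((P.[c] / Q.[c]) ^+ 2 + P.[c] / Q.[c] + c) * (Q.[c] * Q.[c]).
Proof. by move=> Qc; rewrite /antifix_num !(hornerD, hornerM, hornerX); field. Qed.

Lemma size_antifix_num P Q : Q != 0 ->
  size (antifix_num P Q) =
  (if size P <= size Q then size Q * 2 else (size P * 2).-1)%N.
Proof.
move=> Q0; have QQ0 : Q * Q != 0 by rewrite mulf_neq0.
have sQ : (0 < size Q)%N by rewrite size_poly_gt0.
have sQQ := size_mul Q0 Q0; have sPP := size_polyMleq P P.
have sPQ := size_polyMleq P Q.
have sXQQ : size ('X * (Q * Q)) = (size (Q * Q)).+1 by rewrite mulrC size_mulX.
rewrite /antifix_num; case: ifP => hPQ.
  rewrite addrC size_polyDl sXQQ ?(leq_ltn_trans (size_polyD _ _)) //;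
    move: sQ sQQ sPP sPQ hPQ; set p := size P; set q := size Q;
    by set pp := size (P * P); set pq := size (P * Q); set qq := size (Q * Q); lia.
have P0 : P != 0 by rewrite -size_poly_gt0 (leq_trans sQ) // ltnW // ltnNge hPQ.
rewrite -addrA size_polyDl ?(size_mul P0 P0) ?(leq_ltn_trans (size_polyD _ _)) ?sXQQ //;
  move: sQ sQQ sPQ hPQ; set p := size P; set q := size Q;
  by set pq := size (P * Q); set qq := size (Q * Q); lia.
Qed.

Lemma size_antifix_num_neq1 P Q : Q != 0 -> size (antifix_num P Q) != 1%N.
Proof.
move=> Q0; have sQ : (0 < size Q)%N by rewrite size_poly_gt0.
by rewrite size_antifix_num //; move: sQ; set q := size Q; case: ifP; lia.
Qed.

Lemma root_antifix_num P Q c : coprimep P Q -> root (antifix_num P Q) c ->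
  Q.[c] != 0 /\ (P.[c] / Q.[c]) ^+ 2 + P.[c] / Q.[c] + c = 0.
Proof.
move=> cPQ rc; have Qc : Q.[c] != 0.
  apply/eqP => Qc0; have Pc : root P c.
    move: rc; rewrite /root /antifix_num !(hornerD, hornerM, hornerX) Qc0.
    by rewrite !mulr0 !addr0 mulf_eq0 orbb.
  by move: (coprimep_root cPQ Pc); rewrite /root Qc0 eqxx.
split=> //; move/eqP: rc; rewrite horner_antifix_num // => /eqP.
by rewrite mulf_eq0 mulf_eq0 orbb (negPf Qc) orbF => /eqP.
Qed.

(* [v] is fixed by [f2 c] iff [- v] is sent to its opposite: use [P / (- Q)]. *)
Lemma realizes_fixed (a : Kt K) : realizes a 0%N 1%N.
Proof.
have [P [Q [Q0 cPQ ->]]] := fracpq_coprime a.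
have NQ0 : - Q != 0 by rewrite oppr_eq0.
have [c rc] := closed_rootP _ (size_antifix_num_neq1 P NQ0).
have cPNQ : coprimep P (- Q) by rewrite -scaleN1r coprimepZr ?oppr_eq0 ?oner_eq0.
have [NQc ec] := root_antifix_num cPNQ rc.
have Qc : Q.[c] != 0 by rewrite hornerN oppr_eq0 in NQc.
exists c, (P.[c] / Q.[c]); split; first by apply/eval_at_coprime.
apply: has_portrait_fixed; rewrite /f2; apply/eqP; rewrite -subr_eq0.
by move: ec; rewrite hornerN invrN mulrN sqrrN addrAC => ->.
Qed.

End AntifixNum.

Section Exceptional.
Variable K : closedFieldType.
Implicit Types (P Q : {poly K}) (a b : Kt K).

(* Exceptional fractions are exactly those not realizing (1,1); the index
   [n] is odd along the orbit of [0] and even along that of infinity. *)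
Definition exceptional P Q n :=
  [/\ Q != 0, coprimep P Q, P.[0] = 0 &
      exists2 l : K, l != 0 & antifix_num P Q = l *: 'X^n].

Definition exceptional_at a n := exists P Q, exceptional P Q n /\ a = fracpq P Q.


Lemma exceptionalP P Q : Q != 0 -> coprimep P Q ->
  (exists n, exceptional P Q n) <-> ~ exists2 c, root (antifix_num P Q) c & P.[c] != 0.
Proof.
move=> Q0 cPQ; split=> [[n [_ _ P0 [l l0 ->]]] [c]|nex].
  by rewrite rootZ // rootE hornerXn expf_eq0 => /andP[_ /eqP ->]; rewrite P0 eqxx.
have rP c : root (antifix_num P Q) c -> root P c.
  by move=> rc; apply/negPn/negP => Pc; apply: nex; exists c.
have r0 c : root (antifix_num P Q) c -> c = 0.
  move=> rc; have [Qc _] := root_antifix_num cPQ rc; have /eqP Pc := rP c rc.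
  move: rc; rewrite rootE /antifix_num !(hornerD, hornerM, hornerX) Pc.
  by rewrite !mul0r !add0r !mulf_eq0 orbb (negPf Qc) orbF => /eqP.
have /closed_rootP [z rz] := size_antifix_num_neq1 P Q0.
have H0 : antifix_num P Q != 0.
  by apply: contra_neq (oner_neq0 K) => H0; apply: r0; rewrite H0 root0.
have P0 : P.[0] = 0 by apply/eqP; rewrite -[X in P.[X]](r0 z rz); exact: rP.
exists (size (antifix_num P Q)).-1; split=> //.
by exists (lead_coef (antifix_num P Q)); rewrite ?lead_coef_eq0 // -poly_roots0.
Qed.

Lemma size_exceptional P Q n : exceptional P Q n -> size (antifix_num P Q) = n.+1.
Proof. by case=> _ _ _ [l l0 ->]; rewrite size_scale // size_polyXn. Qed.

Lemma exceptional_Q0 P Q n : exceptional P Q n -> Q.[0] != 0.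
Proof. by case=> _ cPQ P0 _; apply: coprimep_root cPQ _; exact/eqP. Qed.

Lemma exceptional0 P Q : ~ exceptional P Q 0.
Proof.
move=> ePQ; have [Q0 _ _ _] := ePQ.
by move: (size_antifix_num_neq1 P Q0); rewrite (size_exceptional ePQ).
Qed.

Lemma exceptional1 P Q : exceptional P Q 1 -> P = 0.
Proof.
move=> ePQ; have [Q0 _ P0 _] := ePQ.
have sQ : (0 < size Q)%N by rewrite size_poly_gt0.
have /size1_polyC -> : (size P <= 1)%N.
  move: (size_exceptional ePQ); rewrite size_antifix_num //.
  by move: sQ; set p := size P; set q := size Q; case: ifP; lia.
by rewrite -horner_coef0 P0.
Qed.

(* The coefficient of ['X] in [antifix_num ('X * P') Q] is
   [Q.[0] * (P'.[0] + Q.[0])]. *)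
Lemma exceptional_divX P Q n : exceptional P Q n.+2 ->
  exists2 P', P = 'X * P' & P'.[0] = - Q.[0].
Proof.
move=> ePQ; have [Q0 cPQ P0 [l _ eH]] := ePQ; have Qz := exceptional_Q0 ePQ.
have /factor_theorem [P' eP] : root P 0 by exact/eqP.
rewrite subr0 mulrC in eP; exists P' => //.
have eH' : 'X * ('X * P' * P' + P' * Q + Q * Q) = 'X * (l *: 'X^(n.+1)).
  by rewrite -scalerAr -exprS -eH /antifix_num eP; ring.
have /(congr1 (horner^~ 0)) := mulXI eH'.
rewrite !(hornerD, hornerM, hornerX) hornerZ hornerXn expr0n mulr0 !mul0r add0r.
by move/eqP; rewrite -mulrDl mulf_eq0 (negPf Qz) orbF addr_eq0 => /eqP.
Qed.

Lemma fracpq_negX : fracpq (- 'X) 1 = - tK K.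
Proof. by rewrite /fracpq /tK tofrac1 divr1 tofracN. Qed.

Lemma exceptional2 P Q : exceptional P Q 2 -> fracpq P Q = - tK K.
Proof.
move=> ePQ; have [Q0 _ _ _] := ePQ; have [P' eP eP'] := exceptional_divX ePQ.
have sQ : (0 < size Q)%N by rewrite size_poly_gt0.
have [sP' sQ1] : (size P' <= 1)%N /\ (size Q <= 1)%N.
  move: (size_exceptional ePQ); rewrite size_antifix_num // eP mulrC.
  have [->|P'0] := eqVneq P' 0.
    by rewrite mul0r size_poly0 /=; set q := size Q; lia.
  by rewrite size_mulX //; move: sQ; set p := size P'; set q := size Q; case: ifP; lia.
rewrite -fracpq_negX; apply/fracpq_eqP; rewrite ?oner_neq0 //.
rewrite eP (size1_polyC sP') (size1_polyC sQ1) -!horner_coef0 eP' polyCN.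
by rewrite mulr1 mulrN mulNr.
Qed.

Lemma phi1_fracpq (A B : {poly K}) : B != 0 -> A - ('X - 1) * B != 0 ->
  phi1 (Some (fracpq A B)) = Some (fracpq (- ('X * (A + B))) (A - ('X - 1) * B)).
Proof.
move=> B0 D0; rewrite /phi1 /fracpq /tK.
have FB : B%:F != 0 by rewrite tofrac_eq0.
have FD : (A - ('X - 1) * B)%:F != 0 by rewrite tofrac_eq0.
move: FD; rewrite tofracB tofracM tofracB tofrac1 => FD.
rewrite (divr_subl _ _ FB) mulf_eq0 invr_eq0 (negPf FD) (negPf FB) /=.
by rewrite -(divr_subl _ _ FB) (phi1_mobius FB FD) tofracN tofracM tofracD.
Qed.

Lemma exceptional_phi1 P Q n : exceptional P Q n ->
  exceptional (- ('X * (P + Q))) (P - ('X - 1) * Q) n.+2.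
Proof.
move=> ePQ; have [Q0 cPQ P0 [l l0 eH]] := ePQ; have Qz := exceptional_Q0 ePQ.
have eD : (P - ('X - 1) * Q).[0] = Q.[0].
  by rewrite !(hornerD, hornerN, hornerM, hornerX, hornerC) P0 !sub0r mulNr mul1r opprK.
have ePQz : (P + Q).[0] = Q.[0] by rewrite hornerD P0 add0r.
split.
- by apply: contraNneq Qz => D0; rewrite -eD D0 horner0.
- rewrite -scaleN1r coprimepZl ?oppr_eq0 ?oner_eq0 // coprimepMl.
  rewrite coprimep_sym coprimepX rootE eD Qz /=.
  have -> : P - ('X - 1) * Q = 1 * (P + Q) + - ('X * Q) by ring.
  rewrite coprimep_addl_mul -scaleN1r coprimepZr ?oppr_eq0 ?oner_eq0 //.
  rewrite coprimepMr coprimepX rootE ePQz Qz /= coprimep_sym.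
  have -> : P + Q = 1 * Q + P by ring.
  by rewrite coprimep_addl_mul coprimep_sym.
- by rewrite hornerN hornerM hornerX mul0r oppr0.
exists l => //.
have -> : antifix_num (- ('X * (P + Q))) (P - ('X - 1) * Q) = 'X^2 * antifix_num P Q.
  by rewrite /antifix_num; ring.
by rewrite eH -scalerAr -exprD add2n.
Qed.

Lemma exceptional_preimage P Q n : exceptional P Q n.+3 ->
  exists2 a, exceptional_at a n.+1 & phi1 (Some a) = Some (fracpq P Q).
Proof.
move=> ePQ; have [Q0 cPQ _ [l l0 eH]] := ePQ; have Qz := exceptional_Q0 ePQ.
have [P' eP eP'] := exceptional_divX ePQ.
have /factor_theorem [R eR] : root (P' + Q) 0 by rewrite rootE hornerD eP' addNr.
rewrite subr0 mulrC in eR.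
have eQ : Q = 'X * R - P' by rewrite -eR addrC addKr.
have eH1 : antifix_num (P' - R) R = l *: 'X^(n.+1).
  apply: mulXI; apply: mulXI; rewrite !mulrA -expr2 -scalerAr -exprD add2n -eH.
  by rewrite /antifix_num eP eQ; ring.
have P'z : P'.[0] != 0 by rewrite eP' oppr_eq0.
have eR0 : R.[0] = P'.[0].
  move: (congr1 (horner^~ 0) eH1).
  rewrite /antifix_num /= hornerZ hornerXn expr0n mulr0.
  rewrite !(hornerD, hornerN, hornerM, hornerX) -mulrDr addrC subrK mul0r add0r.
  by move/eqP; rewrite mulf_eq0 (negPf P'z) orbF subr_eq0 eq_sym => /eqP.
have R0 : R != 0 by apply: contraNneq P'z => R0; rewrite -eR0 R0 horner0.
have D0 : (P' - R) - ('X - 1) * R = - Q by rewrite eQ; ring.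
exists (fracpq (P' - R) R).
  exists (P' - R), R; split=> //; split=> //; last by exists l.
    apply/coprimepP => d dP1 dR; move/coprimepP: cPQ; apply.
      by rewrite eP dvdp_mull // -(subrK R P') dvdp_add.
    by rewrite eQ dvdp_sub ?dvdp_mull // -(subrK R P') dvdp_add.
  by rewrite hornerD hornerN eR0 subrr.
rewrite phi1_fracpq // ?D0 ?oppr_eq0 //; congr Some.
by apply/fracpq_eqP; rewrite ?oppr_eq0 // subrK eP mulrN mulNr.
Qed.

Lemma exceptional_height a n : exceptional_at a n -> has_height (Some a) (n %/ 2).
Proof.
move=> [P [Q [ePQ ->]]]; have [Q0 cPQ _ _] := ePQ; exists P, Q; split=> //.
have sQ : (0 < size Q)%N by rewrite size_poly_gt0.
move: (size_exceptional ePQ); rewrite size_antifix_num //.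
by move: sQ; set p := size P; set q := size Q; case: ifP; lia.
Qed.

Lemma exceptional_at0 : exceptional_at 0 1.
Proof.
exists 0, 1; rewrite fracpq0; split=> //; split; rewrite ?oner_neq0 ?horner0 //.
  by rewrite coprime0p eqpxx.
by exists 1; rewrite ?oner_neq0 // scale1r /antifix_num; ring.
Qed.

Lemma exceptional_at_negt : exceptional_at (- tK K) 2.
Proof.
exists (- 'X), 1; rewrite fracpq_negX; split=> //; split.
- exact: oner_neq0.
- exact: coprimep1.
- by rewrite hornerN hornerX oppr0.
by exists 1; rewrite ?oner_neq0 // scale1r /antifix_num; ring.
Qed.

Lemma exceptional_at_phi1 a n : exceptional_at a n ->
  exists2 b, phi1 (Some a) = Some b & exceptional_at b n.+2.
Proof.
move=> [P [Q [ePQ ->]]]; have ePQ' := exceptional_phi1 ePQ.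
have [Q0 _ _ _] := ePQ; have [D0 _ _ _] := ePQ'.
by eexists; [exact: phi1_fracpq | exists (- ('X * (P + Q))), (P - ('X - 1) * Q)].
Qed.

Lemma iter_phi1_exceptional a n k : exceptional_at a n ->
  exists2 b, iter k (@phi1 K) (Some a) = Some b & exceptional_at b (k.*2 + n).
Proof.
move=> ea; elim: k => [|k [b Eb eb]]; first by exists a.
have [b' Eb' eb'] := exceptional_at_phi1 eb.
by exists b'; rewrite ?iterS ?Eb // doubleS !addSn.
Qed.

Lemma exceptional_at_orbit a n : exceptional_at a n ->
  phi1_orbit (Some 0) (Some a) \/ phi1_orbit None (Some a).
Proof.
elim/ltn_ind: n a => -[|[|[|n]]] IH a [P [Q [ePQ ->]]].
- by case: (exceptional0 ePQ).
- by left; exists 0%N; rewrite (exceptional1 ePQ) fracpq0.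
- by right; exists 1%N; rewrite (exceptional2 ePQ).
have [a' ea' Ea'] := exceptional_preimage ePQ.
have [[k Ek]|[k Ek]] := IH n.+1 (leqnSn _) a' ea'.
  by left; exists k.+1; rewrite iterS Ek.
by right; exists k.+1; rewrite iterS Ek.
Qed.

Lemma orbit_exceptional a :
  phi1_orbit (Some 0) (Some a) \/ phi1_orbit None (Some a) ->
  exists n, exceptional_at a n.
Proof.
case=> [[k Ek]|[[|k] // Ek]].
  have [b Eb eb] := iter_phi1_exceptional k exceptional_at0.
  by exists (k.*2 + 1)%N; move: Eb; rewrite Ek => -[->].
have [b Eb eb] := iter_phi1_exceptional k exceptional_at_negt.
rewrite iterSr /= Eb in Ek.
by exists (k.*2 + 2)%N; case: Ek => <-.
Qed.
End Exceptional.

Section Realization.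
Variable K : closedFieldType.
Hypothesis two_neq0 : (2 : K) != 0.
Implicit Types (c v : K) (P Q : {poly K}).

Lemma has_portrait11_f2 c v :
  has_portrait (f2 c) v 1%N 1%N <-> v != 0 /\ v ^+ 2 + v + c = 0.
Proof.
rewrite has_portrait11 /f2; set u := v ^+ 2 + c; split=> [[uu uv]|[v0 vc]].
  have /eqP : (u - v) * (u + v) = 0.
    by rewrite -subr_sqr -[u ^+ 2](addrK c) uu /u addrK subrr.
  rewrite mulf_eq0 subr_eq0 => /orP[/eqP//|/eqP uNv].
  split; last by rewrite addrAC -/u uNv.
  by apply: contra_notN uv => /eqP v0; rewrite -[u](addrK v) uNv v0 subrr.
have uN : u = - v by apply/eqP; rewrite -addr_eq0 /u addrAC vc.
rewrite uN sqrrN -/u uN; split=> // /eqP; rewrite eq_sym -subr_eq0 opprK.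
by rewrite -mulr2n -mulr_natl mulf_eq0 (negPf two_neq0) (negPf v0).
Qed.

Lemma realizes11_coprime P Q : Q != 0 -> coprimep P Q ->
  realizes (fracpq P Q) 1%N 1%N <-> exists2 c, root (antifix_num P Q) c & P.[c] != 0.
Proof.
move=> Q0 cPQ; split=> [[c [v [/(eval_at_coprime _ _ Q0 cPQ) [Qc ->]]]]|[c rc Pc]].
  move=> /has_portrait11_f2 [v0 vc]; exists c; last first.
    by apply: contraNneq v0 => ->; rewrite mul0r.
  by rewrite /root horner_antifix_num // vc mul0r.
have [Qc vc] := root_antifix_num cPQ rc.
exists c, (P.[c] / Q.[c]); split; first by apply/eval_at_coprime.
by apply/has_portrait11_f2; rewrite mulf_neq0 ?invr_eq0.
Qed.

Lemma not_realizes11 (a : Kt K) : ~ realizes a 1%N 1%N <-> exists n, exceptional_at a n.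
Proof.
split=> [nr|[n [P [Q [ePQ ->]]]]]; last first.
  have [Q0 cPQ _ _] := ePQ.
  by rewrite realizes11_coprime //; apply/(exceptionalP Q0 cPQ); exists n.
have [P [Q [Q0 cPQ Ea]]] := fracpq_coprime a.
have [n ePQ] : exists n, exceptional P Q n.
  by apply/(exceptionalP Q0 cPQ); rewrite -realizes11_coprime // -Ea.
by exists n, P, Q.
Qed.

(* Both the linear coefficient of the numerator and the constant term of the
   denominator of [f2t (G/R)] equal [R.[0]^2], while exceptionality forces them
   to be opposite. *)
Lemma not_exceptional_f2t (G R : {poly K}) n :
  ~ exceptional (G * G + 'X * (R * R)) (R * R) n.
Proof.
move=> ePQ; have Qz := exceptional_Q0 ePQ; have [_ _ P0 _] := ePQ.
have Rz : R.[0] != 0 by apply: contraNneq Qz; rewrite hornerM => ->; rewrite mulr0.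
have /factor_theorem [G1 eG] : root G 0.
  move: P0; rewrite !(hornerD, hornerM, hornerX) mul0r addr0 => /eqP.
  by rewrite mulf_eq0 orbb.
rewrite subr0 in eG.
have eP : G * G + 'X * (R * R) = 'X * ('X * G1 * G1 + R * R) by rewrite eG; ring.
have S0 : ('X * G1 * G1 + R * R).[0] = R.[0] * R.[0].
  by rewrite !(hornerD, hornerM, hornerX) !mul0r add0r.
case: n ePQ => [|[|n]] ePQ.
- exact: exceptional0 ePQ.
- move/eqP: (exceptional1 ePQ); rewrite eP mulf_eq0 polyX_eq0 /= => /eqP S00.
  by move: S0; rewrite S00 horner0 => /esym/eqP; rewrite mulf_eq0 orbb (negPf Rz).
have [P' eP1 eP'0] := exceptional_divX ePQ.
move: eP'0; rewrite -(mulXI (etrans (esym eP) eP1)) S0 hornerM => /eqP.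
rewrite -addr_eq0 -mulr2n -mulr_natl mulf_eq0 (negPf two_neq0) /=.
by rewrite mulf_eq0 orbb (negPf Rz).
Qed.

Lemma realizes_f2t11 (a : Kt K) : realizes (f2t a) 1%N 1%N.
Proof.
have [P [Q [Q0 cPQ ->]]] := fracpq_coprime a.
have QQ0 : Q * Q != 0 by rewrite mulf_neq0.
rewrite f2t_fracpq // realizes11_coprime // ?coprimep_f2t //.
apply: NNPP => /(exceptionalP QQ0 (coprimep_f2t cPQ)) [n].
exact: not_exceptional_f2t.
Qed.

Lemma realizes_preperiodic (a : Kt K) M : realizes a M.+2 1%N.
Proof.
have [c [w [ew pw]]] := realizes_f2t11 (iter M (@f2t K) a).
have [v ev Ew] := eval_at_iter_f2t (k := M.+1) ew; rewrite Ew in pw.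
by exists c, v; split=> //; apply: (has_portrait_iter (M := M.+1) (N := 1%N)).
Qed.
End Realization.

Theorem proposition5p18 (K : closedFieldType) (hchar : [pchar K] =i pred0) :
  (forall (alpha : Kt K) (M : nat),
      ~ realizes alpha M 1 <->
      (M = 1%N /\ (phi1_orbit (Some 0) (Some alpha)
                   \/ phi1_orbit None (Some alpha))))
  /\ (forall k : nat,
        has_height (iter k (@phi1 K) (Some 0)) k
        /\ has_height (iter k (@phi1 K) None) k).
Proof.
have two_neq0 : (2 : K) != 0 by rewrite (proj1 (pcharf0P _) hchar 2).
split=> [alpha M|k].
  split=> [nr|[-> /orbit_exceptional /(not_realizes11 two_neq0) //]].
  case: M nr => [|[|M]] nr.
  - by case: nr; apply: realizes_fixed.
  - split=> //; have [n] := (not_realizes11 two_neq0 alpha).1 nr.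
    exact: exceptional_at_orbit.
  - by case: nr; apply: realizes_preperiodic.
split.
  have [b -> /exceptional_height] := iter_phi1_exceptional k (exceptional_at0 K).
  by rewrite (_ : (k.*2 + 1) %/ 2 = k)%N //; lia.
case: k => [//|k]; rewrite iterSr /=.
have [b -> /exceptional_height] := iter_phi1_exceptional k (exceptional_at_negt K).
by rewrite (_ : (k.*2 + 2) %/ 2 = k.+1)%N //; lia.
Qed.
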